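(* (1) If a nonzero element of $T_n\cap\mathbb{Q}[\boldsymbol{\theta}_n]$ is antisymmetric, then it has degree exactly $n-1$. (2) If a nonzero element of $T_n\cap\mathbb{Q}[\boldsymbol{\theta}_n,\boldsymbol{\xi}_n]$ is antisymmetric, then it has degree exactly $n-1$.
   Context: Let $\mathbb{Q}[\boldsymbol{\theta}_n,\boldsymbol{\xi}_n,\boldsymbol{\rho}_n]$ be the $\mathbb{Q}$-algebra generated by $3n$ pairwise anticommuting variables $\theta_i,\xi_i,\rho_i$ ($1\le i\le n$), with $\mathfrak{S}_n$ acting by permuting indices simultaneously in all three sets; $\mathbb{Q}[\boldsymbol{\theta}_n]$ and $\mathbb{Q}[\boldsymbol{\theta}_n,\boldsymbol{\xi}_n]$ are the subalgebras generated by the $\theta$'s, resp. the $\theta$'s and $\xi$'s. An element $p$ is antisymmetric if $\sigma(p)=\mathrm{sgn}(\sigma)p$ for all $\sigma\in\mathfrak{S}_n$. Derivatives: for a variable $\alpha_j$, $\partial_{\alpha_j}(\alpha_{i_1}\cdots\alpha_{i_k})=(-1)^{\ell-1}\alpha_{i_1}\cdots\widehat{\alpha_{i_\ell}}\cdots\alpha_{i_k}$ if $\alpha_j$ is the $\ell$-th factor and $0$ otherwise. $T_n:=\{f:\sum_{i=1}^n\partial_{\theta_i}^h\partial_{\xi_i}^k\partial_{\rho_i}^\ell f=0\ \forall h,k,\ell\ge0,\ h+k+\ell>0\}$. Degree means total degree in the variables. *)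

From HB Require Import structures.
From mathcomp Require Import all_boot all_order all_algebra all_fingroup.
Set Implicit Arguments. Unset Strict Implicit. Unset Printing Implicit Defensive.
Import GRing.Theory.
Local Open Scope ring_scope.

(* The 3n anticommuting variables: (k, i) with k = 0 (theta_i), 1 (xi_i),
   2 (rho_i). *)
Definition var (n : nat) := ('I_3 * 'I_n)%type.
Definition code (n : nat) (u : var n) : nat := (u.1 * n + u.2)%N.

Definition th (n : nat) (i : 'I_n) : var n := (@Ordinal 3 0 isT, i).
Definition xi (n : nat) (i : 'I_n) : var n := (@Ordinal 3 1 isT, i).
Definition rh (n : nat) (i : 'I_n) : var n := (@Ordinal 3 2 isT, i).

(* An element of Q[theta_n, xi_n, rho_n] is given by its coordinates in the
   basis of monomials: for a set S of variables, f S is the coefficient of the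
   product of the variables of S taken in increasing order. *)
Notation elt n := {ffun {set var n} -> rat}.

(* Derivative d_v: d_v(a_{i1}...a_{ik}) = (-1)^(l-1) (monomial without a_v)
   if a_v is the l-th factor.  Coefficient of monomial T (v notin T) in d_v f
   is (-1)^#{u in T | u < v} * f (T + v). *)
Definition deriv (n : nat) (v : var n) (f : elt n) : elt n :=
  [ffun T : {set var n} =>
     if v \in T then 0
     else (-1) ^+ #|[set u in T | (code u < code v)%N]| * f (v |: T)].

Definition inT (n : nat) (f : elt n) : Prop :=
  forall h k l : nat, (0 < h + k + l)%N ->
    \sum_(i < n) iter h (deriv (th i)) (iter k (deriv (xi i)) (iter l (deriv (rh i)) f)) = 0.

Definition permvar (n : nat) (s : 'S_n) (u : var n) : var n := (u.1, s u.2).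

(* number of inversions of sigma on the (increasingly ordered) monomial S:
   sigma(a_{u1} ... a_{uk}) = (-1)^inv * (sorted monomial on sigma(S)). *)
Definition inv_count (n : nat) (s : 'S_n) (S : {set var n}) : nat :=
  #|[set p : var n * var n | [&& p.1 \in S, p.2 \in S, (code p.1 < code p.2)%N
                                & (code (permvar s p.2) < code (permvar s p.1))%N]]|.

Definition act (n : nat) (s : 'S_n) (f : elt n) : elt n :=
  [ffun T : {set var n} =>
     (-1) ^+ inv_count s (permvar s^-1 @: T) * f (permvar s^-1 @: T)].

Definition antisym_elt (n : nat) (f : elt n) : Prop :=
  forall s : 'S_n, forall T, act s f T = (-1) ^+ odd_perm s * f T.

Definition in_Qth (n : nat) (f : elt n) : Prop :=
  forall S : {set var n}, f S != 0 -> forall u, u \in S -> val u.1 = 0%N.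

Definition in_Qthxi (n : nat) (f : elt n) : Prop :=
  forall S : {set var n}, f S != 0 -> forall u, u \in S -> (val u.1 < 2)%N.

Definition degree (n : nat) (f : elt n) : nat :=
  \max_(S : {set var n} | f S != 0) #|S|.

From Pilot Require Import Defs.
From HB Require Import structures.
From mathcomp Require Import all_boot all_order all_algebra all_fingroup.
From mathcomp Require Import ring zify.
Set Implicit Arguments. Unset Strict Implicit. Unset Printing Implicit Defensive.
Import Order.TTheory GRing.Theory Num.Theory.
Local Open Scope ring_scope.

(* The lower bound is combinatorial: if the indices occurring in a monomial [S]
   miss two values [a] and [b], the transposition (a b) fixes [S], so
   antisymmetry forces [f S = - f S].
   The upper bound is an sl_2 argument.  Let [D] be the sum of the
   d/dtheta_i d/dxi_i and let [R] be left multiplication by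
   (sum_i theta_i)(sum_j xi_j) - n sum_i theta_i xi_i.  Then [R] commutes with
   the sums of the d/dtheta_i and of the d/dxi_i, and on their common kernel,
   in theta-xi-degree k, [D R - R D = n (n - 1 - k)].  So if [D g = 0] for a
   nonzero such [g] of degree k >= n, each [D R^(j+1) g] is a nonzero multiple
   of [R^j g], and no power of [R] kills [g]: absurd, as degrees are bounded.
   Elements of [T_n] are killed by all three sums of derivatives, hence so are
   their theta-xi-homogeneous components, which thus have degree < n. *)

Lemma sum_if_eq (V : nmodType) (I : finType) (F : I -> V) i :
  \sum_j (if j == i then F j else 0) = F i.
Proof. by rewrite -big_mkcond big_pred1_eq. Qed.

Lemma sum_zmod_morphism (I : finType) (U V : zmodType) (F : I -> U -> V) :
  (forall i, zmod_morphism (F i)) -> zmod_morphism (fun x => \sum_i F i x).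
Proof. by move=> F_morph x y; rewrite -sumrB; apply: eq_bigr => i _; rewrite F_morph. Qed.

Section LowestWeight.
Variables (V : zmodType) (raise lower : {additive V -> V}).
Variables (weighted : nat -> V -> Prop) (mu lambda : int) (bound : nat).
Hypothesis weighted_raise : forall k g, weighted k g -> weighted k.+2 (raise g).
Hypothesis lower_raise : forall k g, weighted k g ->
  lower (raise g) = raise (lower g) + g *~ (mu * (lambda - k%:Z)).
Hypothesis weighted_bound : forall k g, (bound < k)%N -> weighted k g -> g = 0.
Hypothesis torsion_free : forall (g : V) z, z != 0 -> g *~ z = 0 -> g = 0.
Hypothesis mu_neq0 : mu != 0.

Lemma weighted_iter_raise k g j : weighted k g -> weighted (k + j.*2) (iter j raise g).
Proof.
move=> wg; elim: j => [|j IH]; first by rewrite addn0.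
by rewrite doubleS !addnS; apply: weighted_raise.
Qed.

(* [sum_(m <= j) mu (lambda - (k + 2 m)) = mu (j + 1) (lambda - k - j)] *)
Lemma lower_iter_raise k g j : weighted k g -> lower g = 0 ->
  lower (iter j.+1 raise g) = iter j raise g *~ (mu * j.+1%:Z * (lambda - k%:Z - j%:Z)).
Proof.
move=> wg g0; elim: j => [|j IH].
  by rewrite /= (lower_raise wg) g0 raddf0 add0r; congr (_ *~ _); ring.
rewrite iterS (lower_raise (weighted_iter_raise j.+1 wg)).
rewrite IH raddfMz -mulrzDr; congr (_ *~ _).
rewrite -addn1 -muln2 !PoszD !PoszM; ring.
Qed.

Lemma lowest_weight_le k g : weighted k g -> lower g = 0 -> g != 0 -> k%:Z <= lambda.
Proof.
move=> wg g0 g_neq0; rewrite leNgt; apply/negP => lambda_lt_k.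
have iter_neq0 j : iter j raise g != 0.
  elim: j => // j IH; apply: contraNneq IH => iter_eq0.
  apply/eqP; apply: (torsion_free (z := mu * j.+1%:Z * (lambda - k%:Z - j%:Z))).
  - by rewrite !mulf_neq0 //; lia.
  - by rewrite -lower_iter_raise // iter_eq0 raddf0.
move: (iter_neq0 bound.+1).
by rewrite (weighted_bound _ (weighted_iter_raise bound.+1 wg)) ?eqxx //; lia.
Qed.

End LowestWeight.

Local Notation deriv := Defs.deriv.
Local Notation act := Defs.act.

Section ExteriorAlgebra.
Variable n : nat.
Implicit Types (f g : elt n) (S T : {set var n}) (u v w : var n) (i j : 'I_n).

Definition sgn_below T v : rat := (-1) ^+ #|[set u in T | (code u < code v)%N]|.

Lemma derivE v g T : deriv v g T = if v \in T then 0 else sgn_below T v * g (v |: T).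
Proof. by rewrite ffunE. Qed.

(* The sign counts the variables of [T] that [v] must move past. *)
Definition lmul v g : elt n :=
  [ffun T : {set var n} => if v \in T then sgn_below T v * g (T :\ v) else 0].

Lemma lmulE v g T : lmul v g T = if v \in T then sgn_below T v * g (T :\ v) else 0.
Proof. by rewrite ffunE. Qed.

Lemma code_inj : injective (@code n).
Proof.
move=> [a i] [b j]; rewrite /code /= => eq_code.
have n_gt0 : (0 < n)%N by apply: leq_ltn_trans (ltn_ord i).
have eq_ij : i = j :> nat.
  by have := congr1 (modn^~ n) eq_code; rewrite /= !modnMDl !modn_small.
have eq_ab : a = b :> nat.
  by have := congr1 (divn^~ n) eq_code; rewrite /= !divnMDl // !divn_small ?addn0.
by congr pair; apply: val_inj.
Qed.

Lemma sgn_below_setU1 w T v : w \notin T ->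
  sgn_below (w |: T) v = (-1) ^+ (code w < code v)%N * sgn_below T v.
Proof.
move=> wT; rewrite /sgn_below -exprD; congr (_ ^+ _).
case w_lt_v: (code w < code v)%N.
  rewrite (_ : [set u in w |: T | _] = w |: [set u in T | (code u < code v)%N]).
    by rewrite cardsU1 inE (negbTE wT).
  by apply/setP=> u; rewrite !inE; case: eqVneq => // ->; rewrite w_lt_v.
rewrite add0n; apply: eq_card => u; rewrite !inE; case: eqVneq => // ->.
by rewrite w_lt_v (negbTE wT).
Qed.

Lemma sgn_below_setD1 w T v : w \in T ->
  sgn_below T v = (-1) ^+ (code w < code v)%N * sgn_below (T :\ w) v.
Proof. by move=> wT; rewrite -{1}(setD1K wT) sgn_below_setU1 // setD11. Qed.

Lemma sgn_below_sqr T v : sgn_below T v * sgn_below T v = 1.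
Proof. by rewrite /sgn_below -expr2 -exprM mulnC exprM sqrrN expr1n. Qed.

Lemma lmul_derivE v g T : lmul v (deriv v g) T = if v \in T then g T else 0.
Proof.
rewrite lmulE; case: ifP => vT //.
rewrite derivE setD11 setD1K // [in X in X * _](sgn_below_setD1 _ vT) ltnn mul1r.
by rewrite mulrA sgn_below_sqr mul1r.
Qed.

Lemma deriv_lmulE v g T : deriv v (lmul v g) T = if v \in T then 0 else g T.
Proof.
rewrite derivE; case: ifP => vT //.
rewrite lmulE setU11 setU1K ?vT // sgn_below_setU1 ?vT // ltnn mul1r.
by rewrite mulrA sgn_below_sqr mul1r.
Qed.

(* Exactly one of [v], [w] lies below the other, whence the sign. *)
Lemma deriv_lmul_neq v w g : v != w -> deriv v (lmul w g) = - lmul w (deriv v g).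
Proof.
move=> vw; have wv : (w == v) = false by rewrite eq_sym (negbTE vw).
apply/ffunP=> T; rewrite derivE lmulE [RHS]ffunE lmulE derivE !inE vw wv /=.
case: (boolP (v \in T)) => vT; first by case: ifP; rewrite ?mulr0 oppr0.
case: (boolP (w \in T)) => wT /=; last by rewrite mulr0 oppr0.
have -> : (v |: T) :\ w = v |: (T :\ w).
  by apply/setP=> u; rewrite !inE; case: eqVneq => // ->; rewrite wv.
rewrite sgn_below_setU1 // (sgn_below_setD1 _ wT).
have code_vw : code v != code w by apply: contra vw => /eqP/code_inj ->.
by case: ltngtP code_vw => //= _ _; rewrite !expr0 !expr1; ring.
Qed.

Lemma deriv_lmul v w g :
  deriv v (lmul w g) = (if v == w then g else 0) - lmul w (deriv v g).
Proof.
have [<-|vw] := eqVneq v w; last by rewrite deriv_lmul_neq // sub0r.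
apply/ffunP=> T; rewrite [RHS]ffunE [in RHS]ffunE deriv_lmulE lmul_derivE.
by case: (v \in T); rewrite ?subrr ?subr0.
Qed.

Fact deriv_is_zmod_morphism v : zmod_morphism (deriv v).
Proof.
by move=> g h; apply/ffunP=> T; rewrite !ffunE; case: ifP; rewrite ?subr0 ?mulrBr.
Qed.
HB.instance Definition _ v :=
  GRing.isZmodMorphism.Build (elt n) (elt n) (deriv v) (deriv_is_zmod_morphism v).

Fact lmul_is_zmod_morphism v : zmod_morphism (lmul v).
Proof.
by move=> g h; apply/ffunP=> T; rewrite !ffunE; case: ifP; rewrite ?subr0 ?mulrBr.
Qed.
HB.instance Definition _ v :=
  GRing.isZmodMorphism.Build (elt n) (elt n) (lmul v) (lmul_is_zmod_morphism v).

Lemma th_eq i j : (th i == th j) = (i == j).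
Proof. by rewrite xpair_eqE eqxx. Qed.

Lemma xi_eq i j : (xi i == xi j) = (i == j).
Proof. by rewrite xpair_eqE eqxx. Qed.

Lemma th_neq_xi i j : (th i == xi j) = false.
Proof. by rewrite xpair_eqE. Qed.

Lemma xi_neq_th i j : (xi i == th j) = false.
Proof. by rewrite xpair_eqE. Qed.

Definition weight T : nat := #|[set u in T | (u.1 < 2)%N]|.

Lemma weight_setU1 v T : (v.1 < 2)%N -> v \notin T -> weight (v |: T) = (weight T).+1.
Proof.
move=> v_lt2 vT; rewrite /weight (_ : [set u in v |: T | _] = v |: [set u in T | (u.1 < 2)%N]).
  by rewrite cardsU1 inE (negbTE vT).
by apply/setP => u; rewrite !inE; case: eqVneq => // ->; rewrite v_lt2.
Qed.

Lemma weight_sum T : weight T = (\sum_(i < n) ((th i \in T) + (xi i \in T)))%N.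
Proof.
rewrite /weight -sum1_card big_mkcond /=.
transitivity
  (\sum_(a < 3) \sum_(i < n) if (a, i) \in [set u in T | (u.1 < 2)%N] then 1 else 0)%N.
  by rewrite pair_big /=; apply: eq_bigr => -[a i].
rewrite !big_ord_recl big_ord0 addn0 addnA big_split /= [X in (_ + X)%N = _]big1 ?addn0.
  congr (_ + _)%N; apply: eq_bigr => i _; rewrite inE andbT.
    by rewrite (_ : (ord0, i) = th i); [case: (_ \in T) | congr pair; apply: val_inj].
  by rewrite (_ : (lift ord0 ord0, i) = xi i); [case: (_ \in T) | congr pair; apply: val_inj].
by move=> i _; rewrite inE andbF.
Qed.

Lemma weight_id S : {in S, forall u, (u.1 < 2)%N} -> weight S = #|S|.
Proof. by move=> S_lt2; apply: eq_card => u; rewrite !inE andb_idr // => /S_lt2. Qed.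

Definition homog k : {pred elt n} :=
  fun g => [forall T, (g T != 0) ==> (weight T == k)].

Lemma homogP k g : reflect (forall T, g T != 0 -> weight T = k) (g \in homog k).
Proof.
by apply: (iffP forallP) => g_k T; [move/(implyP (g_k T))/eqP | apply/implyP => /g_k ->].
Qed.

Fact homog_zmod_closed k : zmod_closed (homog k).
Proof.
split=> [|g h /homogP g_k /homogP h_k]; apply/homogP => T; rewrite !ffunE ?eqxx //.
by case: (eqVneq (g T) 0) => [->|/g_k //]; rewrite sub0r oppr_eq0 => /h_k.
Qed.
HB.instance Definition _ k :=
  GRing.isZmodClosed.Build (elt n) (homog k) (homog_zmod_closed k).

Lemma lmul_homog v k g : (v.1 < 2)%N -> g \in homog k -> lmul v g \in homog k.+1.
Proof.
move=> v_lt2 /homogP g_k; apply/homogP => T; rewrite lmulE.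
case: ifP => vT; last by rewrite eqxx.
rewrite mulf_eq0 negb_or => /andP[_ /g_k <-].
by rewrite -(weight_setU1 v_lt2) ?setD11 // setD1K.
Qed.

Lemma homog_eq0 k g : (#|{: var n}| < k)%N -> g \in homog k -> g = 0.
Proof.
move=> k_gt /homogP g_k; apply/ffunP => T; rewrite ffunE; apply: contraTeq k_gt => /g_k <-.
by rewrite -leqNgt max_card.
Qed.

Definition weight_part (p : pred nat) g : elt n :=
  [ffun T : {set var n} => if p (weight T) then g T else 0].

Fact weight_part_is_zmod_morphism p : zmod_morphism (weight_part p).
Proof. by move=> g h; apply/ffunP=> T; rewrite !ffunE; case: ifP; rewrite ?subr0. Qed.
HB.instance Definition _ p := GRing.isZmodMorphism.Build (elt n) (elt n) (weight_part p)
  (weight_part_is_zmod_morphism p).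

Lemma weight_part_homog k g : weight_part (pred1 k) g \in homog k.
Proof. by apply/homogP => T; rewrite ffunE /=; case: (weight T =P k); rewrite ?eqxx. Qed.

Lemma deriv_weight_part v p g : (v.1 < 2)%N ->
  deriv v (weight_part p g) = weight_part (p \o succn) (deriv v g).
Proof.
move=> v_lt2; apply/ffunP=> T; rewrite !ffunE; case: ifP => vT; first by case: ifP.
by rewrite /= weight_setU1 ?vT //; case: ifP; rewrite ?mulr0.
Qed.

Definition dth g := \sum_(i < n) deriv (th i) g.
Definition dxi g := \sum_(i < n) deriv (xi i) g.
Definition dthxi g := \sum_(i < n) deriv (th i) (deriv (xi i) g).
Definition mul_pth g := \sum_(i < n) lmul (th i) g.
Definition mul_pxi g := \sum_(i < n) lmul (xi i) g.
Definition mul_pthxi g := \sum_(i < n) lmul (th i) (lmul (xi i) g).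

HB.instance Definition _ := GRing.isZmodMorphism.Build (elt n) (elt n) dth
  (sum_zmod_morphism (fun i => raddfB (deriv (th i)))).
HB.instance Definition _ := GRing.isZmodMorphism.Build (elt n) (elt n) dxi
  (sum_zmod_morphism (fun i => raddfB (deriv (xi i)))).
HB.instance Definition _ := GRing.isZmodMorphism.Build (elt n) (elt n) dthxi
  (sum_zmod_morphism (fun i => raddfB (deriv (th i) \o deriv (xi i)))).
HB.instance Definition _ := GRing.isZmodMorphism.Build (elt n) (elt n) mul_pth
  (sum_zmod_morphism (fun i => raddfB (lmul (th i)))).
HB.instance Definition _ := GRing.isZmodMorphism.Build (elt n) (elt n) mul_pxi
  (sum_zmod_morphism (fun i => raddfB (lmul (xi i)))).
HB.instance Definition _ := GRing.isZmodMorphism.Build (elt n) (elt n) mul_pthxi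
  (sum_zmod_morphism (fun i => raddfB (lmul (th i) \o lmul (xi i)))).

Lemma sum_deriv_lmul (F : 'I_n -> var n) w g :
  \sum_(j < n) deriv (F j) (lmul w g) =
  \sum_(j < n) (if F j == w then g else 0) - lmul w (\sum_(j < n) deriv (F j) g).
Proof. by rewrite raddf_sum -sumrB; apply: eq_bigr => j _; rewrite deriv_lmul. Qed.

Lemma dth_lmul_th i g : dth (lmul (th i) g) = g - lmul (th i) (dth g).
Proof. by rewrite /dth sum_deriv_lmul; under eq_bigr do rewrite th_eq; rewrite sum_if_eq. Qed.

Lemma dth_lmul_xi i g : dth (lmul (xi i) g) = - lmul (xi i) (dth g).
Proof. by rewrite /dth sum_deriv_lmul big1 ?sub0r // => j _; rewrite th_neq_xi. Qed.

Lemma dxi_lmul_th i g : dxi (lmul (th i) g) = - lmul (th i) (dxi g).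
Proof. by rewrite /dxi sum_deriv_lmul big1 ?sub0r // => j _; rewrite xi_neq_th. Qed.

Lemma dxi_lmul_xi i g : dxi (lmul (xi i) g) = g - lmul (xi i) (dxi g).
Proof. by rewrite /dxi sum_deriv_lmul; under eq_bigr do rewrite xi_eq; rewrite sum_if_eq. Qed.

Lemma dthxi_lmul v g : dthxi (lmul v g) = lmul v (dthxi g) +
  \sum_(j < n) ((if xi j == v then deriv (th j) g else 0) -
                (if th j == v then deriv (xi j) g else 0)).
Proof.
rewrite /dthxi raddf_sum -big_split /=; apply: eq_bigr => j _.
rewrite deriv_lmul raddfB /= deriv_lmul (fun_if (deriv (th j))) raddf0.
by rewrite opprB addrCA.
Qed.

Lemma dthxi_lmul_th i g : dthxi (lmul (th i) g) = lmul (th i) (dthxi g) - deriv (xi i) g.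
Proof.
rewrite dthxi_lmul -(sum_if_eq (fun j => deriv (xi j) g) i) -sumrN; congr (_ + _).
by apply: eq_bigr => j _; rewrite xi_neq_th th_eq sub0r.
Qed.

Lemma dthxi_lmul_xi i g : dthxi (lmul (xi i) g) = lmul (xi i) (dthxi g) + deriv (th i) g.
Proof.
rewrite dthxi_lmul -[in RHS](sum_if_eq (fun j => deriv (th j) g) i); congr (_ + _).
by apply: eq_bigr => j _; rewrite xi_eq th_neq_xi subr0.
Qed.

Lemma dth_mul_pth g : dth (mul_pth g) = g *+ n - mul_pth (dth g).
Proof.
rewrite /mul_pth raddf_sum /=; under eq_bigr do rewrite dth_lmul_th.
by rewrite sumrB sumr_const card_ord.
Qed.

Lemma dth_mul_pxi g : dth (mul_pxi g) = - mul_pxi (dth g).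
Proof. by rewrite /mul_pxi raddf_sum /= -sumrN; apply: eq_bigr => i _; rewrite dth_lmul_xi. Qed.

Lemma dxi_mul_pth g : dxi (mul_pth g) = - mul_pth (dxi g).
Proof. by rewrite /mul_pth raddf_sum /= -sumrN; apply: eq_bigr => i _; rewrite dxi_lmul_th. Qed.

Lemma dxi_mul_pxi g : dxi (mul_pxi g) = g *+ n - mul_pxi (dxi g).
Proof.
rewrite /mul_pxi raddf_sum /=; under eq_bigr do rewrite dxi_lmul_xi.
by rewrite sumrB sumr_const card_ord.
Qed.

Lemma dthxi_mul_pth g : dthxi (mul_pth g) = mul_pth (dthxi g) - dxi g.
Proof. by rewrite /mul_pth raddf_sum /= -sumrB; apply: eq_bigr => i _; rewrite dthxi_lmul_th. Qed.

Lemma dthxi_mul_pxi g : dthxi (mul_pxi g) = mul_pxi (dthxi g) + dth g.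
Proof.
by rewrite /mul_pxi raddf_sum /= -big_split; apply: eq_bigr => i _; rewrite dthxi_lmul_xi.
Qed.

Lemma dth_mul_pthxi g : dth (mul_pthxi g) = mul_pxi g + mul_pthxi (dth g).
Proof.
rewrite /mul_pthxi raddf_sum /= -big_split; apply: eq_bigr => i _.
by rewrite dth_lmul_th dth_lmul_xi raddfN opprK.
Qed.

Lemma dxi_mul_pthxi g : dxi (mul_pthxi g) = mul_pthxi (dxi g) - mul_pth g.
Proof.
rewrite /mul_pthxi raddf_sum /= -sumrB; apply: eq_bigr => i _.
by rewrite dxi_lmul_th dxi_lmul_xi raddfB opprB.
Qed.

Definition euler g :=
  \sum_(i < n) (lmul (th i) (deriv (th i) g) + lmul (xi i) (deriv (xi i) g)).

Lemma euler_homog k g : g \in homog k -> euler g = g *+ k.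
Proof.
move=> /homogP g_k; apply/ffunP => T; rewrite sum_ffunE ffunMnE.
under eq_bigr do rewrite ffunE !lmul_derivE.
have [->|/g_k <-] := eqVneq (g T) 0.
  by rewrite mul0rn big1 // => i _; rewrite !if_same addr0.
rewrite weight_sum -sumrMnr; apply: eq_bigr => i _.
by rewrite mulrnDr; case: (th i \in T); case: (xi i \in T).
Qed.

Lemma dthxi_mul_pthxi g : dthxi (mul_pthxi g) = mul_pthxi (dthxi g) + euler g - g *+ n.
Proof.
have -> : g *+ n = \sum_(i < n) g by rewrite sumr_const card_ord.
rewrite /mul_pthxi /euler raddf_sum /= -!big_split -sumrB; apply: eq_bigr => i _ /=.
rewrite dthxi_lmul_th dthxi_lmul_xi deriv_lmul eqxx raddfD /=.
by rewrite opprB !addrA.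
Qed.

Definition raise g := mul_pth (mul_pxi g) - mul_pthxi g *+ n.

Fact raise_is_zmod_morphism : zmod_morphism raise.
Proof. by move=> g h; rewrite /raise !raddfB /= mulrnBl !opprD !opprK addrACA. Qed.
HB.instance Definition _ := GRing.isZmodMorphism.Build (elt n) (elt n) raise
  raise_is_zmod_morphism.

Lemma raise_homog k g : g \in homog k -> raise g \in homog k.+2.
Proof.
move=> g_k; rewrite rpredB ?rpredMn ?rpred_sum // => i _.
  by apply: lmul_homog => //; rewrite rpred_sum // => j _; exact: lmul_homog.
by apply: lmul_homog => //; exact: lmul_homog.
Qed.

Lemma dth_raise g : dth (raise g) = raise (dth g).
Proof.
rewrite /raise raddfB raddfMn /= dth_mul_pth dth_mul_pxi dth_mul_pthxi raddfN /=.
by rewrite opprK mulrnDl opprD addrA (addrAC (_ *+ n)) subrr add0r.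
Qed.

Lemma dxi_raise g : dxi (raise g) = raise (dxi g).
Proof.
rewrite /raise raddfB raddfMn /= dxi_mul_pth dxi_mul_pxi dxi_mul_pthxi.
by rewrite raddfB raddfMn /= mulrnBl !opprB subrKA.
Qed.

Lemma dthxi_raise k g : g \in homog k -> dth g = 0 -> dxi g = 0 ->
  dthxi (raise g) = raise (dthxi g) + g *~ (n%:Z * (n%:Z - 1 - k%:Z)).
Proof.
move=> g_k dth_g dxi_g.
rewrite /raise raddfB raddfMn /= dthxi_mul_pth dthxi_mul_pxi dthxi_mul_pthxi dxi_mul_pxi.
rewrite dth_g dxi_g (euler_homog g_k) !raddf0 !addr0.
move: (mul_pth _) (mul_pthxi _) => a b; apply/ffunP => T.
rewrite !(ffunE, ffunMnE, ffunMzE); ring.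
Qed.

Lemma dth_weight_part p g : dth (weight_part p g) = weight_part (p \o succn) (dth g).
Proof. by rewrite /dth raddf_sum; apply: eq_bigr => i _; rewrite deriv_weight_part. Qed.

Lemma dxi_weight_part p g : dxi (weight_part p g) = weight_part (p \o succn) (dxi g).
Proof. by rewrite /dxi raddf_sum; apply: eq_bigr => i _; rewrite deriv_weight_part. Qed.

Lemma dthxi_weight_part p g :
  dthxi (weight_part p g) = weight_part (p \o succn \o succn) (dthxi g).
Proof. by rewrite /dthxi raddf_sum; apply: eq_bigr => i _; rewrite !deriv_weight_part. Qed.

Lemma elt_torsion_free g z : z != 0 -> g *~ z = 0 -> g = 0.
Proof.
move=> z_neq0 /ffunP gz; apply/ffunP => T; move/eqP: (gz T).
by rewrite ffunMzE !ffunE mulrz_eq0 (negbTE z_neq0) => /eqP.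
Qed.

Lemma weight_lt_of_ker f S : (0 < n)%N -> dth f = 0 -> dxi f = 0 -> dthxi f = 0 ->
  f S != 0 -> (weight S < n)%N.
Proof.
move=> n_gt0 dth_f dxi_f dthxi_f fS.
pose weighted k g := [/\ g \in homog k, dth g = 0 & dxi g = 0].
have weighted_raise k g : weighted k g -> weighted k.+2 (raise g).
  case=> g_k dth_g dxi_g.
  by rewrite /weighted dth_raise dxi_raise dth_g dxi_g raddf0 raise_homog.
have lower_raise k g : weighted k g ->
    dthxi (raise g) = raise (dthxi g) + g *~ (n%:Z * (n%:Z - 1 - k%:Z)).
  by case; apply: dthxi_raise.
have weighted_bound k g : (#|{: var n}| < k)%N -> weighted k g -> g = 0.
  by move=> k_gt [g_k _ _]; apply: homog_eq0 g_k.
have n_neq0 : n%:Z != 0 by rewrite -lt0n.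
set g := weight_part (pred1 (weight S)) f.
have weighted_g : weighted (weight S) g.
  split; first exact: weight_part_homog.
    by rewrite dth_weight_part dth_f raddf0.
  by rewrite dxi_weight_part dxi_f raddf0.
have dthxi_g : dthxi g = 0 by rewrite dthxi_weight_part dthxi_f raddf0.
have g_neq0 : g != 0 by apply: contra_neq fS => /ffunP/(_ S); rewrite !ffunE /= eqxx.
have := lowest_weight_le weighted_raise lower_raise weighted_bound elt_torsion_free n_neq0
  weighted_g dthxi_g g_neq0.
lia.
Qed.

Lemma act_fixed s f S : {in S, forall u, permvar s u = u} -> act s f S = f S.
Proof.
move=> s_fix.
have sV_fix : {in S, forall u, permvar s^-1 u = u}.
  by move=> [a i] /s_fix [si]; rewrite /permvar /= -{1}si permK.
have inv_count0 : inv_count s S = 0%N.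
  apply/eqP; rewrite cards_eq0; apply/eqP/setP => -[u w]; rewrite !inE /=.
  apply/negP => /and4P[uS wS lt_uw]; rewrite (s_fix u uS) (s_fix w wS).
  by rewrite ltnNge (ltnW lt_uw).
by rewrite ffunE (eq_in_imset (g := id) sV_fix) imset_id inv_count0 mul1r.
Qed.

Lemma antisym_fixed_eq0 f s S : antisym_elt f -> odd_perm s ->
  {in S, forall u, permvar s u = u} -> f S = 0.
Proof.
move=> f_anti s_odd s_fix; have := f_anti s S; rewrite act_fixed // s_odd mulN1r => fSN.
have : f S *+ 2 = 0 by rewrite mulr2n {1}fSN addNr.
by move/eqP; rewrite mulrn_eq0 => /eqP.
Qed.

(* Two indices unused by [S] give a transposition fixing every variable of [S]. *)
Lemma odd_perm_fixing S : (#|S|.+2 <= n)%N ->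
  exists2 s : 'S_n, odd_perm s & {in S, forall u, permvar s u = u}.
Proof.
move=> S_small; pose I := [set u.2 | u in S].
have : (1 < #|~: I|)%N.
  rewrite -(leq_add2l #|I|) cardsC card_ord addn2; apply: leq_trans S_small.
  by rewrite !ltnS leq_imset_card.
case/card_gt1P => a [b [aI bI ab]]; exists (tperm a b); first by rewrite odd_tperm ab.
move=> [c i] ciS; have iI : i \in I by rewrite (imset_f (fun u : var n => u.2) ciS).
have neq_i x : x \in ~: I -> x != i by apply: contraTneq => ->; rewrite inE negbK.
by rewrite /permvar /= tpermD ?neq_i.
Qed.

Lemma antisym_card_support_ge f S : antisym_elt f -> f S != 0 -> (n.-1 <= #|S|)%N.
Proof.
move=> f_anti; rewrite leqNgt; apply: contra_neqN => S_small.
have [|s s_odd s_fix] := @odd_perm_fixing S; first by lia.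
exact: antisym_fixed_eq0 s_fix.
Qed.

Lemma degree_eq_card f m : f != 0 -> (forall S, f S != 0 -> #|S| = m) -> degree f = m.
Proof.
move=> f_neq0 f_card; have [S fS] : exists S, f S != 0.
  apply/existsP; apply: contraNT f_neq0 => /existsPn f0.
  by apply/eqP/ffunP => S; rewrite ffunE; apply/eqP; rewrite -[_ == 0]negbK f0.
apply/eqP; rewrite eqn_leq; apply/andP; split; first by apply/bigmax_leqP => T /f_card ->.
by rewrite -(f_card S fS); apply: leq_bigmax_cond.
Qed.

Lemma card_support_antisym_T f S : (0 < n)%N -> inT f -> in_Qthxi f -> antisym_elt f ->
  f S != 0 -> #|S| = n.-1.
Proof.
move=> n_gt0 f_T f_thxi f_anti fS.
have := weight_lt_of_ker n_gt0 (f_T 1 0 0 isT) (f_T 0 1 0 isT) (f_T 1 1 0 isT) fS.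
rewrite weight_id => [weight_lt | u]; last exact: f_thxi.
by have := antisym_card_support_ge f_anti fS; lia.
Qed.

End ExteriorAlgebra.

Unset Implicit Arguments.

Theorem corollary2p4 (n : nat) (hn : (0 < n)%N) :
  (forall f : elt n, (f != 0 :> elt n) -> inT f -> in_Qth f -> antisym_elt f ->
     degree f = n.-1) /\
  (forall f : elt n, (f != 0 :> elt n) -> inT f -> in_Qthxi f -> antisym_elt f ->
     degree f = n.-1).
Proof.
have thxi_case (f : elt n) :
  f != 0 -> inT f -> in_Qthxi f -> antisym_elt f -> degree f = n.-1.
  by move=> f_neq0 f_T f_thxi f_anti; apply: degree_eq_card => // S; apply: card_support_antisym_T.
split=> // f f_neq0 f_T f_th f_anti; apply: thxi_case => // S fS u uS.
by rewrite (f_th S fS u uS).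
Qed.
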